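(* Let $n\ge2$ and $\delta>0$. For $i\in\{1,2\}$ and $j\in\{1,\dots,n\}$ let $z_j^{(i)}\in\mathbb{R}$ be the standardized samples defined in the context, let $\tilde z_j^{(i)}\in\delta\mathbb{Z}$ be a nearest integer multiple of $\delta$ to $z_j^{(i)}$ (so $|z_j^{(i)}-\tilde z_j^{(i)}|\le\delta/2$), and let $r=\frac{1}{n-1}\sum_{j=1}^n z_j^{(1)}z_j^{(2)}$ and $\tilde r=\frac{1}{n-1}\sum_{j=1}^n\tilde z_j^{(1)}\tilde z_j^{(2)}$. If $R\in\mathbb{R}$ satisfies $|\tilde z_j^{(i)}|\le R$ for all $i\in\{1,2\}$ and $j\in\{1,\dots,n\}$, then $$|r-\tilde r|\le\frac{n\delta}{n-1}\left(R+\frac{\delta}{4}\right).$$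
   Context: For $i=1,2$, $x_1^{(i)},\dots,x_n^{(i)}$ are real samples (not all equal), $\bar x^{(i)}$ is their mean, $s^{(i)}=\sqrt{\frac{1}{n-1}\sum_{j=1}^n(x_j^{(i)}-\bar x^{(i)})^2}$, and $z_j^{(i)}=(x_j^{(i)}-\bar x^{(i)})/s^{(i)}$; thus $r$ is the sample Pearson correlation of the two sample sequences. (In the paper, $\tilde z_j^{(i)}$ is the nearest element of the fixed-point set $\{x\delta: x\in\mathbb{Z}, |x|\le M\}$ for some $M\in\mathbb{N}$; the bound does not depend on $M$.) *)

From HB Require Import structures.
From mathcomp Require Import all_boot all_order all_algebra.
Set Implicit Arguments. Unset Strict Implicit. Unset Printing Implicit Defensive.
Import Order.TTheory GRing.Theory Num.Theory.
Local Open Scope ring_scope.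

Definition smean (R : realFieldType) (n : nat) (x : 'I_n -> R) : R :=
  (\sum_(j < n) x j) / n%:R.

Definition ssd (R : rcfType) (n : nat) (x : 'I_n -> R) : R :=
  Num.sqrt ((\sum_(j < n) (x j - smean x) ^+ 2) / (n.-1)%:R).

Definition zscore (R : rcfType) (n : nat) (x : 'I_n -> R) (j : 'I_n) : R :=
  (x j - smean x) / ssd x.

Definition nearest_mult (R : realFieldType) (delta t y : R) : Prop :=
  (exists k : int, y = k%:~R * delta) /\
  (forall k : int, `|t - y| <= `|t - k%:~R * delta|).

Definition corr_sum (R : realFieldType) (n : nat) (a b : 'I_n -> R) : R :=
  (\sum_(j < n) a j * b j) / (n.-1)%:R.

From HB Require Import structures.
From mathcomp Require Import all_boot all_order all_algebra.
From mathcomp Require Import ring lra.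
Import Order.TTheory GRing.Theory Num.Theory.
Local Open Scope ring_scope.

(* Each rounded z-score is within delta/2 of the exact one, so every product
   z^(1)_j z^(2)_j moves by at most (delta/2)(2R + delta/2) = delta(R + delta/4);
   summing the n products and dividing by n - 1 gives the bound. *)

Lemma ler_norm_half (R : realFieldType) (d e : R) : 0 < e ->
  `|d| <= `|d - e| -> `|d| <= `|d + e| -> `|d| <= e / 2%:R.
Proof.
move=> e_gt0 le_dB le_dD.
have sqr_le (u v : R) : `|u| <= `|v| -> u ^+ 2 <= v ^+ 2.
  by move=> le_uv; rewrite -[u ^+ 2]real_normK ?num_real // -[v ^+ 2]real_normK
       ?num_real // lerXn2r // nnegrE.
have sqr_le_dB := sqr_le _ _ le_dB; have sqr_le_dD := sqr_le _ _ le_dD.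
by rewrite ler_norml; apply/andP; split; nra.
Qed.

Lemma nearest_mult_dist (R : realFieldType) (delta t y : R) : 0 < delta ->
  nearest_mult delta t y -> `|t - y| <= delta / 2%:R.
Proof.
move=> delta_gt0 [[k ->] nearest].
apply: ler_norm_half => //.
- have -> : t - k%:~R * delta - delta = t - (k + 1)%:~R * delta by ring.
  exact: nearest.
- have -> : t - k%:~R * delta + delta = t - (k - 1)%:~R * delta by ring.
  exact: nearest.
Qed.

Lemma ler_normMB (R : realDomainType) (a b a' b' e M : R) :
  `|a - a'| <= e -> `|b - b'| <= e -> `|a'| <= M -> `|b'| <= M ->
  `|a * b - a' * b'| <= e * (2%:R * M + e).
Proof.
move=> le_a le_b le_a' le_b'.
have -> : a * b - a' * b' = (a - a') * b' + a' * (b - b') + (a - a') * (b - b')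
  by ring.
have p1 : `|a - a'| * `|b'| <= e * M by apply: ler_pM.
have p2 : `|a'| * `|b - b'| <= M * e by apply: ler_pM.
have p3 : `|a - a'| * `|b - b'| <= e * e by apply: ler_pM.
apply: (le_trans (ler_normD _ _)); rewrite normrM.
apply: (le_trans (lerD (ler_normD _ _) (lexx _))); rewrite !normrM.
lra.
Qed.

(* No lower bound on n is needed: for n <= 1 both sides vanish, since x / 0 = 0. *)
Lemma corr_sum_dist (R : realFieldType) (n : nat) (a b a' b' : 'I_n -> R) (c : R) :
  (forall j, `|a j * b j - a' j * b' j| <= c) ->
  `|corr_sum a b - corr_sum a' b'| <= n%:R * c / (n.-1)%:R.
Proof.
move=> le_c.
rewrite /corr_sum -mulrBl -sumrB normrM normfV normr_nat ler_wpM2r // ?invr_ge0 //.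
apply: (le_trans (ler_norm_sum _ _ _)).
apply: (le_trans (ler_sum _ (fun j _ => le_c j))).
by rewrite sumr_const card_ord mulr_natl.
Qed.

Theorem lemma2 (R : rcfType) (n : nat) (delta Rb : R)
  (x : 'I_2 -> 'I_n -> R) (zt : 'I_2 -> 'I_n -> R) :
  (2 <= n)%N -> 0 < delta ->
  (forall i : 'I_2, exists j1 j2 : 'I_n, x i j1 != x i j2) ->
  (forall (i : 'I_2) (j : 'I_n), nearest_mult delta (zscore (x i) j) (zt i j)) ->
  (forall (i : 'I_2) (j : 'I_n), `|zt i j| <= Rb) ->
  `|corr_sum (zscore (x 0)) (zscore (x 1)) - corr_sum (zt 0) (zt 1)|
    <= n%:R * delta / (n.-1)%:R * (Rb + delta / 4%:R).
Proof.
move=> _ delta_gt0 _ rounded bounded.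
rewrite mulrAC -[n%:R * delta * _]mulrA.
apply: corr_sum_dist => j.
have -> : delta * (Rb + delta / 4%:R) = delta / 2%:R * (2%:R * Rb + delta / 2%:R)
  by field.
by apply: ler_normMB => //; apply: nearest_mult_dist.
Qed.
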